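(* Let $\mathcal{A}$ be a set of $N$ arms and $1\le B\le N$. In the full feedback setting, any randomized algorithm that selects $B$ arms per round has worst-case expected regret \[R_T^*\ge\Omega\left(\left(\tfrac14\right)^B(\log_2(N)-\log_2(B))\right)\quad\text{for }T\ge\Omega(\log_2(N)-\log_2(B)).\]
   Context: In each round $t=1,\dots,T$ an oblivious adversary fixes $c_t:\mathcal{A}\to[0,1]$; the algorithm picks $S_t\subset\mathcal{A}$ with $|S_t|=B$ and incurs cost $c_t(S_t):=\min_{a\in S_t}c_t(a)$; then $c_t$ is revealed (full feedback). $R_T^*(\mathbf{ALG}):=\max_{c_1,\dots,c_T}\mathbb{E}\left[\sum_{t=1}^T c_t(S_t)-\min_{a^*\in\mathcal{A}}\sum_{t=1}^T c_t(a^* )\right]$, expectation over the algorithm's randomness. *)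

From mathcomp Require Import all_boot all_order all_algebra.
From mathcomp Require Import reals exp.
Set Implicit Arguments. Unset Strict Implicit. Unset Printing Implicit Defensive.
Import Order.TTheory GRing.Theory Num.Theory.
Local Open Scope ring_scope.

Section Bandit.
Variables (R : realType) (N : nat).

Definition cost := {ffun 'I_N -> R}.

Definition valid_costs (c : nat -> cost) : Prop :=
  forall t a, 0 <= c t a <= 1.

(* c_t(S) = min_{a in S} c_t(a); the default 1 is harmless since costs are
   <= 1 and the chosen sets are nonempty (B >= 1). *)
Definition set_cost (c : cost) (S : {set 'I_N}) : R :=
  \big[Order.min/1]_(a in S) c a.

(* A randomized full-feedback algorithm, described by the (marginal)
   distribution of S_t given the revealed history c_1..c_{t-1}. *)
Definition algorithm := seq cost -> {ffun {set 'I_N} -> R}.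

Definition valid_alg (B : nat) (alg : algorithm) : Prop :=
  forall h : seq cost,
    (forall S, 0 <= alg h S) /\ \sum_(S : {set 'I_N}) alg h S = 1 /\
    (forall S, alg h S != 0 -> #|S| = B).

Definition expected_cost (alg : algorithm) (c : nat -> cost) (T : nat) : R :=
  \sum_(t < T) \sum_(S : {set 'I_N}) alg (mkseq c t) S * set_cost (c t) S.

Definition regret_vs (alg : algorithm) (c : nat -> cost) (T : nat) (a : 'I_N) : R :=
  expected_cost alg c T - \sum_(t < T) c t a.

(* r <= R_T^*(alg) = sup_c max_a regret_vs alg c T a *)
Definition worst_regret_ge (alg : algorithm) (T : nat) (r : R) : Prop :=
  forall eps : R, 0 < eps ->
    exists c : nat -> cost, valid_costs c /\
      exists a : 'I_N, r - eps < regret_vs alg c T a.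

End Bandit.

Definition log2 {R : realType} (x : R) : R := ln x / ln 2.

From mathcomp Require Import all_boot all_order all_algebra.
From mathcomp Require Import reals exp.
From mathcomp Require Import zify ring lra.
Set Implicit Arguments. Unset Strict Implicit. Unset Printing Implicit Defensive.
Import Order.TTheory GRing.Theory Num.Theory.
Local Open Scope ring_scope.

(* The adversary zooms into nested intervals of arms.  For k = floor(log_{B+1} N)
   rounds it splits the current interval into B+1 equal blocks; any B arms
   miss one of the blocks, so the algorithm misses some block with probability
   at least 1/(B+1).  That block costs 0, every other arm costs 1, and the
   adversary recurses into it.  The algorithm thus pays at least 1/(B+1) per
   round, while an arm of the innermost block pays nothing; the regret is at
   least min(T, k)/(B+1), and k >= (ln N - ln B)/(2B), B(B+1) <= 4^B turn this
   into the stated bound. *)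

Definition in_block (lo w i a : nat) : bool := (lo + i * w <= a < lo + i.+1 * w)%N.

Lemma in_block_divn lo w i a : in_block lo w i a -> ((a - lo) %/ w)%N = i.
Proof.
rewrite /in_block mulSn => /andP[lo_a a_hi].
have w_gt0 : (0 < w)%N by lia.
have -> : (a - lo = i * w + (a - lo - i * w))%N by lia.
by rewrite divnMDl // divn_small ?addn0 //; lia.
Qed.

Lemma exists_block_avoiding N n lo w (S : {set 'I_N}) : (#|S| <= n)%N ->
  exists i : 'I_n.+1, [forall a in S, ~~ in_block lo w i a].
Proof.
move=> small_S; apply/existsP/contraT => /existsPn hit.
pose index (a : 'I_N) : 'I_n.+1 := inord ((a - lo) %/ w).
have : [set: 'I_n.+1] \subset index @: S.
  apply/subsetP => i _; move: (hit i); rewrite negb_forall_in => /exists_inP[a aS].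
  rewrite negbK => /in_block_divn a_i; apply/imsetP; exists a => //.
  by rewrite /index a_i inord_val.
move/subset_leq_card; rewrite cardsT card_ord => /leq_trans/(_ (leq_imset_card _ _)).
by rewrite ltnNge small_S.
Qed.

Lemma sum_le_card_mul_arg_max (R : realDomainType) (I : finType) (i0 : I) (f : I -> R) :
  \sum_i f i <= #|I|%:R * f [arg max_(i > i0) f i]%O.
Proof.
rewrite mulr_natl -sumr_const; apply: ler_sum => i _.
by case: arg_maxP => // j _; apply.
Qed.

Lemma le_set_cost (R : realType) N (c : cost R N) (S : {set 'I_N}) x :
  x <= 1 -> (forall a, a \in S -> x <= c a) -> x <= set_cost c S.
Proof.
move=> x_le1 x_le_c; rewrite /set_cost; elim/big_ind: _ => // y z x_le_y x_le_z.
by rewrite le_min x_le_y.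
Qed.

Section MissProbability.
Variables (R : realType) (N n : nat) (p : {ffun {set 'I_N} -> R}).
Hypotheses (p_ge0 : forall S, 0 <= p S) (p_sum1 : \sum_S p S = 1)
  (p_small : forall S, p S != 0 -> (#|S| <= n)%N).

Definition miss_prob lo w (i : 'I_n.+1) : R :=
  \sum_(S : {set 'I_N}) p S * [forall a in S, ~~ in_block lo w i a]%:R.

Definition worst_block lo w : 'I_n.+1 := [arg max_(i > ord0) miss_prob lo w i]%O.

Lemma sum_miss_prob_ge1 lo w : 1 <= \sum_i miss_prob lo w i.
Proof.
rewrite /miss_prob exchange_big /= -{1}p_sum1; apply: ler_sum => S _.
rewrite -mulr_sumr; have [->|pS_neq0] := eqVneq (p S) 0; first by rewrite mul0r.
apply: ler_peMr => //; have [i avoid_i] := exists_block_avoiding lo w (p_small pS_neq0).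
by rewrite (bigD1 i) //= avoid_i lerDl sumr_ge0.
Qed.

Lemma worst_block_miss_prob lo w : 1 / n.+1%:R <= miss_prob lo w (worst_block lo w).
Proof.
have := sum_le_card_mul_arg_max ord0 (miss_prob lo w); rewrite card_ord => avg_le.
by rewrite ler_pdivrMr // mulrC (le_trans (sum_miss_prob_ge1 lo w) avg_le).
Qed.

End MissProbability.

Section Adversary.
Variables (R : realType) (N B k : nat) (alg : algorithm R N).

Definition width t : nat := B.+1 ^ (k - t.+1).

Definition adv_block (h : seq (cost R N)) lo t : 'I_B.+1 :=
  worst_block B (alg h) lo (width t).

Definition adv_cost lo t (i : 'I_B.+1) : cost R N :=
  [ffun a : 'I_N => ((t < k)%N && ~~ in_block lo (width t) i a)%:R].

Fixpoint play t : seq (cost R N) * nat :=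
  if t is s.+1 then
    let h := (play s).1 in let lo := (play s).2 in let i := adv_block h lo s in
    (rcons h (adv_cost lo s i), (lo + i * width s)%N)
  else ([::], 0%N).

Definition lo t : nat := (play t).2.
Definition block t : 'I_B.+1 := adv_block (play t).1 (lo t) t.
Definition adv t : cost R N := adv_cost (lo t) t (block t).

Lemma play_history t : (play t).1 = mkseq adv t.
Proof. by elim: t => [//|t IH]; rewrite mkseqS -IH. Qed.

Lemma block_worst t : block t = worst_block B (alg (mkseq adv t)) (lo t) (width t).
Proof. by rewrite /block /adv_block play_history. Qed.

Lemma lo_succ t : lo t.+1 = (lo t + block t * width t)%N.
Proof. by []. Qed.

Lemma lo_step t : (t < k)%N ->
  (lo t.+1 + B.+1 ^ (k - t.+1) <= lo t + B.+1 ^ (k - t))%N.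
Proof.
move=> t_lt_k; rewrite lo_succ -/(width t) -addnA -mulSnr leq_add2l.
have -> : (B.+1 ^ (k - t) = B.+1 * width t)%N.
  by rewrite /width -expnS; congr (_ ^ _)%N; lia.
by rewrite leq_mul2r ltn_ord orbT.
Qed.

Lemma lo_nested t s : (t <= s)%N -> (s <= k)%N ->
  (lo t <= lo s)%N /\ (lo s + B.+1 ^ (k - s) <= lo t + B.+1 ^ (k - t))%N.
Proof.
elim: s => [|s IH]; first by rewrite leqn0 => /eqP ->.
rewrite leq_eqVlt => /orP[/eqP <- //|t_le_s] s_lt_k.
have [lo_le hi_le] := IH t_le_s (ltnW s_lt_k).
have := lo_step s_lt_k; rewrite lo_succ; split; lia.
Qed.

Lemma lo_final_in_block t : (t < k)%N -> in_block (lo t) (width t) (block t) (lo k).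
Proof.
move=> t_lt_k; have [lo_le hi_le] := lo_nested t_lt_k (leqnn k).
rewrite lo_succ -/(width t) subnn expn0 in lo_le hi_le.
by rewrite /in_block mulSn; lia.
Qed.

Lemma lo_final_lt : (B.+1 ^ k <= N)%N -> (lo k < N)%N.
Proof.
have [_] := lo_nested (leq0n k) (leqnn k).
by rewrite subnn subn0 expn0 (_ : lo 0 = 0%N) //; lia.
Qed.

Lemma adv_valid : valid_costs adv.
Proof. by move=> t a; rewrite ffunE ler0n lern1 leq_b1. Qed.

Lemma adv_final_arm t (a : 'I_N) : a = lo k :> nat -> adv t a = 0.
Proof.
move=> a_final; rewrite ffunE a_final.
by case: ltnP => //= t_lt_k; rewrite lo_final_in_block.
Qed.

Hypothesis algP : valid_alg B alg.

Lemma adv_round_cost t : (t < k)%N ->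
  1 / B.+1%:R <= \sum_S alg (mkseq adv t) S * set_cost (adv t) S.
Proof.
move=> t_lt_k; have [p_ge0 [p_sum1 p_supp]] := algP (mkseq adv t).
have p_small S : alg (mkseq adv t) S != 0 -> (#|S| <= B)%N by move/p_supp ->.
apply: le_trans (worst_block_miss_prob p_ge0 p_sum1 p_small (lo t) (width t)) _.
rewrite /adv block_worst; apply: ler_sum => S _.
apply: ler_wpM2l => //; apply: le_set_cost => [|a aS]; first by rewrite lern1 leq_b1.
rewrite ffunE t_lt_k /= ler_nat.
by case: forall_inP => // /(_ a aS) ->.
Qed.

Lemma adv_regret (a : 'I_N) T : a = lo k :> nat ->
  (minn T k)%:R / B.+1%:R <= regret_vs alg adv T a.
Proof.
move=> a_final; rewrite /regret_vs /expected_cost -sumrB.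
elim: T => [|T IH]; first by rewrite big_ord0 min0n mul0r.
rewrite big_ord_recr /= adv_final_arm // subr0.
have -> : minn T.+1 k = (minn T k + (T < k))%N by rewrite !minnE; case: ltnP; lia.
rewrite natrD mulrDl; apply: lerD IH _.
case: ltnP => [T_lt_k|_]; first by rewrite mulr1n adv_round_cost.
have [p_ge0 _] := algP (mkseq adv T).
rewrite mul0r; apply: sumr_ge0 => S _; apply: mulr_ge0 => //.
by apply: le_set_cost => // b _; rewrite ffunE.
Qed.

End Adversary.

Lemma mul_succ_le_exp4 n : (n * n.+1 <= 4 ^ n)%N.
Proof.
have n_lt : (n < 2 ^ n)%N by apply: ltn_expl.
by rewrite -[4%N]/(2 * 2)%N expnMn leq_mul // ltnW.
Qed.

Lemma ln_ratio_le (R : realType) (N B k : nat) : (1 <= B <= N)%N ->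
  (N < B.+1 ^ k.+1)%N -> ln (N%:R : R) - ln B%:R <= 2 * B%:R * k%:R.
Proof.
move=> /andP[B_ge1 B_le_N] N_lt.
have lnB_ge0 : 0 <= ln (B%:R : R) by rewrite ln_ge0 // ler1n.
have [->|B_neq_N] := eqVneq N B; first by rewrite subrr !mulr_ge0.
have k_ge1 : (1 <= k)%N.
  by case: k N_lt => // /[!expn1]; rewrite ltnS => N_le_B; lia.
have lnN_le : ln (N%:R : R) <= ln (B.+1%:R : R) *+ k.+1.
  rewrite -lnXn // ler_ln ?posrE ?ltr0n ?exprn_gt0 //; last by lia.
  by rewrite -natrX ler_nat ltnW.
have lnB1_le : ln (B.+1%:R : R) <= B%:R.
  by rewrite -addn1 natrD addrC le_ln1Dx // (lt_le_trans _ (ler0n _ _)) ?ltrN10.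
have : ln (B.+1%:R : R) *+ k.+1 <= 2 * B%:R * k%:R.
  apply: le_trans (_ : B%:R *+ k.+1 <= _); first by rewrite lerMn2r lnB1_le orbT.
  by rewrite -mulr_natr -natrM -[2]/(2%:R) -!natrM ler_nat; nia.
lra.
Qed.

Lemma regret_bound_arith (R : realType) (B T k : nat) (D : R) : (1 <= B)%N ->
  D <= T%:R -> D <= 2 * B%:R * k%:R ->
  (1 / 4) ^+ B * D / 2 <= (minn T k)%:R / B.+1%:R.
Proof.
move=> B_ge1 D_le_T D_le_k.
have B_ge1R : 1 <= B%:R :> R by rewrite ler1n.
have D_le_min : D <= 2 * B%:R * (minn T k)%:R.
  case: leqP => // _; apply: le_trans D_le_T _.
  by rewrite ler_peMl //; lra.
have exp4 : B%:R * B.+1%:R <= 4 ^+ B :> R.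
  by rewrite -natrM -natrX ler_nat mul_succ_le_exp4.
have m_ge0 : 0 <= (minn T k)%:R :> R by [].
rewrite expr_div_n expr1n ler_pdivlMr // mul1r -!mulrA ler_pdivrMl ?exprn_gt0 //.
nra.
Qed.

Theorem proposition10 (R : realType) :
  exists c0 C : R, 0 < c0 /\ 0 < C /\
  forall (N B T : nat), (1 <= B <= N)%N ->
    C * (log2 (N%:R : R) - log2 (B%:R : R)) <= T%:R ->
    forall alg : algorithm R N, valid_alg B alg ->
      worst_regret_ge alg T
        (c0 * (1 / 4) ^+ B * (log2 (N%:R : R) - log2 (B%:R : R))).
Proof.
have ln2_gt0 : 0 < ln (2 : R) by rewrite ln_gt0 // ltr1n.
exists (ln 2 / 2), (ln 2); split; first by rewrite divr_gt0.
split=> // N B T B_range T_large alg algP eps eps_gt0.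
have /andP[B_ge1 B_le_N] := B_range.
set D := ln (N%:R : R) - ln B%:R.
have log2_ratio : log2 (N%:R : R) - log2 B%:R = D / ln 2 by rewrite /log2 mulrBl.
have D_le_T : D <= T%:R by rewrite log2_ratio mulrC mulfVK ?gt_eqF in T_large.
have := @trunc_log_bounds B.+1 N B_ge1 (leq_trans B_ge1 B_le_N).
set k := trunc_log _ _ => /andP[k_le_N N_lt_k].
exists (adv B k alg); split; first exact: adv_valid.
exists (Ordinal (lo_final_lt alg k_le_N)).
apply: lt_le_trans (adv_regret algP (a := Ordinal _) T erefl).
apply: lt_le_trans (regret_bound_arith B_ge1 D_le_T (ln_ratio_le R B_range N_lt_k)).
rewrite log2_ratio (_ : _ * _ * _ = (1 / 4) ^+ B * D / 2); first by lra.
by field; rewrite gt_eqF.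
Qed.
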